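(* Let $a<b$, $F:(a,b)\to\mathcal{K}(\mathbb{R}^n)$, $x_0\in(a,b)$, $\alpha>0$, and suppose $F$ is metrically $\alpha$-differentiable at $x_0$ with constant $L>0$, i.e. $F$ is metrically differentiable at $x_0$ and there is $\delta>0$ such that $\sup_{y\in F(x_0)}\mathrm{haus}([x_0,x]^MF|_y,D^M_+F(x_0)|_y)\le L|x-x_0|^\alpha$ for $0<x-x_0<\delta$ and $\sup_{y\in F(x_0)}\mathrm{haus}([x_0,x]^MF|_y,D^M_-F(x_0)|_y)\le L|x-x_0|^\alpha$ for $0<x_0-x<\delta$. Then for all $x\in(a,b)$ with $|x-x_0|<\delta$, $$\mathrm{haus}(F(x),L^MF(x))\le L|x-x_0|^{1+\alpha}.$$
   Context: $\mathcal{K}(\mathbb{R}^n)$ is the set of nonempty compact subsets of $\mathbb{R}^n$, $|\cdot|$ the Euclidean norm, $\mathrm{dist}(x,A)=\min_{a\in A}|x-a|$, $\mathrm{haus}$ the Hausdorff distance. For $a\in\mathbb{R}^n$, $B\in\mathcal{K}(\mathbb{R}^n)$, $\Pi_B(a)=\{b\in B:|a-b|=\mathrm{dist}(a,B)\}$; for $A,B\in\mathcal{K}(\mathbb{R}^n)$, $\Pi(A,B)=\{(a,b)\in A\times B: a\in\Pi_A(b)\text{ or }b\in\Pi_B(a)\}$. For $x\ne x_0$, $y_0\in F(x_0)$: $[x_0,x]^MF|_{y_0}=\{\frac{y-y_0}{x-x_0}:(y_0,y)\in\Pi(F(x_0),F(x))\}$. $F$ is metrically differentiable from the right at $x_0$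 if for every $y\in F(x_0)$ there is a nonempty set $D^M_+F(x_0)|_y$ with $\sup_{y\in F(x_0)}\mathrm{haus}(D^M_+F(x_0)|_y,[x_0,x]^MF|_y)\to0$ as $x\to x_0^+$; from the left analogously with $D^M_-F(x_0)|_y$ and $x\to x_0^-$; metrically differentiable means both. The local metric linear approximant is $L^MF(x)=\bigcup_{y\in F(x_0)}\big(\{y\}+(x-x_0)D^M_+F(x_0)|_y\big)$ for $x\ge x_0$ and $L^MF(x)=\bigcup_{y\in F(x_0)}\big(\{y\}+(x-x_0)D^M_-F(x_0)|_y\big)$ for $x<x_0$, where $\{c\}+\lambda A=\{c+\lambda a:a\in A\}$. *)

From HB Require Import structures.
From mathcomp Require Import all_boot all_order all_algebra.
From mathcomp Require Import all_classical all_reals all_analysis.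
Set Implicit Arguments. Unset Strict Implicit. Unset Printing Implicit Defensive.
Import Order.TTheory GRing.Theory Num.Theory.
Import numFieldNormedType.Exports.
Local Open Scope classical_set_scope.
Local Open Scope ring_scope.

Section MetricDiff.
Variables (R : realType) (n : nat).
Notation V := 'rV[R]_n.

Definition enorm (v : V) : R := Num.sqrt (\sum_(i < n) v ord0 i ^+ 2).

Definition edist (x : V) (A : set V) : \bar R :=
  ereal_inf [set (enorm (x - a))%:E | a in A].

Definition haus (A B : set V) : \bar R :=
  maxe (ereal_sup [set edist a B | a in A]) (ereal_sup [set edist b A | b in B]).

Definition proj (B : set V) (a : V) : set V :=
  [set b | B b /\ (enorm (a - b))%:E = edist a B].

Definition metric_pairs (A B : set V) : set (V * V) :=
  [set p | A p.1 /\ B p.2 /\ (proj A p.2 p.1 \/ proj B p.1 p.2)].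

Definition metric_quot (F : R -> set V) (x0 x : R) (y0 : V) : set V :=
  [set (x - x0)^-1 *: (y - y0) | y in [set y | metric_pairs (F x0) (F x) (y0, y)]].

Definition sup_haus (S : set V) (A B : V -> set V) : \bar R :=
  ereal_sup [set haus (A y) (B y) | y in S].

Definition metric_diff_right (a b : R) (F : R -> set V) (x0 : R) (Dp : V -> set V) :=
  (forall y, F x0 y -> Dp y !=set0) /\
  forall e : R, 0 < e -> exists d : R, 0 < d /\
    forall x : R, a < x < b -> x0 < x < x0 + d ->
      (sup_haus (F x0) Dp (metric_quot F x0 x) <= e%:E)%E.

Definition metric_diff_left (a b : R) (F : R -> set V) (x0 : R) (Dm : V -> set V) :=
  (forall y, F x0 y -> Dm y !=set0) /\
  forall e : R, 0 < e -> exists d : R, 0 < d /\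
    forall x : R, a < x < b -> x0 - d < x < x0 ->
      (sup_haus (F x0) Dm (metric_quot F x0 x) <= e%:E)%E.

Definition metric_lin_approx (F : R -> set V) (x0 : R) (Dp Dm : V -> set V) (x : R) : set V :=
  if x0 <= x then
    [set z | exists y, F x0 y /\ exists d, Dp y d /\ z = y + (x - x0) *: d]
  else
    [set z | exists y, F x0 y /\ exists d, Dm y d /\ z = y + (x - x0) *: d].

End MetricDiff.

From Pilot Require Import Defs.
From HB Require Import structures.
From mathcomp Require Import all_boot all_order all_algebra.
From mathcomp Require Import all_classical all_reals all_analysis.
Import Order.TTheory GRing.Theory Num.Theory.
Import numFieldNormedType.Exports.
Set Implicit Arguments.
Unset Strict Implicit.
Unset Printing Implicit Defensive.
Local Open Scope classical_set_scope.
Local Open Scope ring_scope.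

(* For x <> x0 and h = x - x0, every z in F(x) equals y + h ((z - y) / h) with
   y a metric projection of z onto the compact set F(x0), so F(x) is the sweep
   of F(x0) along the difference-quotient sets [x0,x]^M F|_y, scaled by h.
   L^M F(x) is the sweep along the derivative sets, and sweeping with the same
   factor h multiplies Hausdorff distances of the fibres by |h|; hence
   haus(F(x), L^M F(x)) <= |h| L |h|^alpha.  At x = x0 both sets are F(x0). *)

Section HausdorffSweep.
Variables (R : realType) (n : nat).
Notation V := 'rV[R]_n.

Lemma enormZ (k : R) (v : V) : enorm (k *: v) = `|k| * enorm v.
Proof.
rewrite /enorm; under eq_bigr do rewrite mxE exprMn.
by rewrite -mulr_sumr sqrtrM ?sqrtr_sqr ?sqr_ge0.
Qed.

Lemma enorm0 : enorm (0 : V) = 0.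
Proof. by rewrite -(scale0r (0 : V)) enormZ normr0 mul0r. Qed.

Lemma enorm_continuous : continuous (@enorm R n).
Proof.
move=> v; apply: continuous_comp; last exact: sqrt_continuous.
apply: continuous_big => [|i _]; first exact: add_continuous.
move=> w; apply: (@continuous_comp _ _ _ (fun u : V => u ord0 i) (fun t : R => t ^+ 2)).
  exact: coord_continuous.
exact: exprn_continuous.
Qed.

Lemma proj_nonempty (A : set V) (z : V) :
  A !=set0 -> compact A -> Defs.proj A z !=set0.
Proof.
move=> A0 cA.
have dist_cont : continuous (fun y : V => enorm (z - y)).
  move=> y; apply: (@continuous_comp _ _ _ (fun y : V => z - y) (@enorm R n)).
    by apply: continuousB; [exact: cst_continuous | exact: cvg_id].
  exact: enorm_continuous.
have [c /set_mem Ac cmin] :=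
  compact_EVT_min A0 cA (continuous_subspaceT dist_cont).
exists c; split => //; apply/eqP; rewrite eq_le; apply/andP; split.
  by apply: le_ereal_inf_tmp => _ [y Ay <-]; rewrite lee_fin cmin //; exact/mem_set.
by apply: ereal_inf_lbound; exists c.
Qed.

Lemma edist_leP (z : V) (A : set V) (c : R) :
  (Defs.edist z A <= c%:E)%E <->
  (forall e, 0 < e -> exists2 a, A a & enorm (z - a) <= c + e).
Proof.
split => [zA e e0 | near_zA].
  have /ereal_inf_lt[_ [a Aa <-]] : (Defs.edist z A < (c + e)%:E)%E.
    by apply: le_lt_trans zA _; rewrite lte_fin ltrDl.
  by rewrite lte_fin => /ltW; exists a.
apply/lee_addgt0Pr => e /near_zA[a Aa za].
rewrite -EFinD; apply: ge_ereal_inf.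
by exists (enorm (z - a))%:E; [exists a | rewrite lee_fin].
Qed.

Lemma haus_leP (A B : set V) (c : R) :
  (haus A B <= c%:E)%E <->
  (forall a, A a -> (Defs.edist a B <= c%:E)%E) /\
  (forall b, B b -> (Defs.edist b A <= c%:E)%E).
Proof.
rewrite /haus ge_max; split => [/andP[AB BA] | [AB BA]].
  by split=> x Sx; [apply: le_trans AB | apply: le_trans BA];
    apply: ereal_sup_ubound; exists x.
by apply/andP; split; apply: ge_ereal_sup => _ [x Sx <-]; [exact: AB | exact: BA].
Qed.

Lemma haus_self_le0 (A : set V) : (haus A A <= 0%:E)%E.
Proof.
by apply/haus_leP; split=> a Aa; apply/edist_leP => e e0;
  exists a; rewrite // subrr enorm0 add0r ltW.
Qed.

Lemma haus_le_sup_haus (S : set V) (A B : V -> set V) (y : V) :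
  S y -> (haus (A y) (B y) <= sup_haus S A B)%E.
Proof. by move=> Sy; apply: ereal_sup_ubound; exists y. Qed.

Definition lin_sweep (S : set V) (D : V -> set V) (h : R) : set V :=
  [set z | exists y, S y /\ exists d, D y d /\ z = y + h *: d].

Lemma lin_sweep0 (S : set V) (D : V -> set V) :
  (forall y, S y -> D y !=set0) -> lin_sweep S D 0 = S.
Proof.
move=> D0; apply/seteqP; split => [_ [y [Sy [d [_ ->]]]] | y Sy].
  by rewrite scale0r addr0.
have [d Dd] := D0 y Sy.
by exists y; split => //; exists d; rewrite scale0r addr0.
Qed.

Lemma edist_lin_sweep_le (S : set V) (Q D : V -> set V) (h K : R) :
  (forall y q, S y -> Q y q -> (Defs.edist q (D y) <= K%:E)%E) ->
  forall z, lin_sweep S Q h z ->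
  (Defs.edist z (lin_sweep S D h) <= (`|h| * K)%:E)%E.
Proof.
move=> QD _ [y [Sy [q [Qq ->]]]]; apply/edist_leP => e e0.
(* dividing by |h| + 1 rather than |h| keeps the case h = 0 *)
have e'0 : 0 < e / (`|h| + 1) by rewrite divr_gt0 // ltr_wpDl.
have [d Dd qd] := (edist_leP _ _ _).1 (QD y q Sy Qq) _ e'0.
exists (y + h *: d); first by exists y; split => //; exists d.
rewrite opprD addrACA subrr add0r -scalerBr enormZ.
apply: le_trans (ler_wpM2l (normr_ge0 h) qd) _.
rewrite mulrDr lerD2l mulrCA ler_piMr 1?ltW //.
by rewrite ltr_pdivrMr ?mul1r ?ltrDl // ltr_wpDl.
Qed.

Lemma haus_lin_sweep_le (S : set V) (Q D : V -> set V) (h K : R) :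
  (forall y, S y -> (haus (Q y) (D y) <= K%:E)%E) ->
  (haus (lin_sweep S Q h) (lin_sweep S D h) <= (`|h| * K)%:E)%E.
Proof.
move=> QD; apply/haus_leP; split; apply: edist_lin_sweep_le => y q Sy Qq.
- by have /haus_leP[+ _] := QD y Sy; apply.
- by have /haus_leP[_ +] := QD y Sy; apply.
Qed.

Lemma lin_sweep_metric_quot (F : R -> set V) (x0 x : R) :
  x != x0 -> (forall z, F x z -> Defs.proj (F x0) z !=set0) ->
  lin_sweep (F x0) (metric_quot F x0 x) (x - x0) = F x.
Proof.
rewrite -subr_eq0 => h0 projF.
have unscale z y : y + (x - x0) *: ((x - x0)^-1 *: (z - y)) = z.
  by rewrite scalerA mulfV // scale1r addrC subrK.
apply/seteqP; split => [_ [y [_ [_ [[z [_ [Fz _]] <-] ->]]]] | z Fz].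
  by rewrite unscale.
have [y [Fy projy]] := projF z Fz.
exists y; split => //; exists ((x - x0)^-1 *: (z - y)); rewrite unscale; split => //.
by exists z => //; split => //; split => //; left.
Qed.

Lemma metric_lin_approxE (F : R -> set V) (x0 x : R) (Dp Dm : V -> set V) :
  metric_lin_approx F x0 Dp Dm x =
  lin_sweep (F x0) (if x0 <= x then Dp else Dm) (x - x0).
Proof. by rewrite /metric_lin_approx; case: ifP. Qed.

End HausdorffSweep.

Theorem mainTheorem3 (R : realType) (n : nat) (a b : R) (F : R -> set 'rV[R]_n)
  (x0 alpha L delta : R) (Dp Dm : 'rV[R]_n -> set 'rV[R]_n) :
  a < b ->
  (forall x, a < x < b -> F x !=set0 /\ compact (F x)) ->
  a < x0 < b ->
  0 < alpha -> 0 < L ->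
  metric_diff_right a b F x0 Dp ->
  metric_diff_left a b F x0 Dm ->
  0 < delta ->
  (forall x, a < x < b -> 0 < x - x0 < delta ->
     (sup_haus (F x0) (metric_quot F x0 x) Dp <= (L * `|x - x0| `^ alpha)%:E)%E) ->
  (forall x, a < x < b -> 0 < x0 - x < delta ->
     (sup_haus (F x0) (metric_quot F x0 x) Dm <= (L * `|x - x0| `^ alpha)%:E)%E) ->
  forall x, a < x < b -> `|x - x0| < delta ->
    (haus (F x) (metric_lin_approx F x0 Dp Dm x) <= (L * `|x - x0| `^ (1 + alpha))%:E)%E.
Proof.
move=> _ Fc x0ab alpha_gt0 _ [Dp0 _] _ _ Hp Hm x xab dist_lt.
have [F0_neq0 F0_compact] := Fc x0 x0ab.
rewrite metric_lin_approxE; have [->|xx0] := eqVneq x x0.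
  rewrite lexx subrr lin_sweep0 // normr0 powR0 ?mulr0 ?gt_eqF ?addr_gt0 //.
  exact: haus_self_le0.
rewrite -{1}(lin_sweep_metric_quot xx0) => [|z _]; last exact: proj_nonempty.
rewrite powRD; last by rewrite normr_eq0 subr_eq0 (negPf xx0) implybT.
rewrite powRr1 // mulrCA; apply: haus_lin_sweep_le => y Fy.
case: (ltgtP x0 x) xx0 => [x0_lt_x _ | x_lt_x0 _ | //].
- apply: le_trans (haus_le_sup_haus _ _ Fy) (Hp x xab _).
  by rewrite subr_gt0 x0_lt_x -[x - x0]gtr0_norm // subr_gt0.
- apply: le_trans (haus_le_sup_haus _ _ Fy) (Hm x xab _).
  by rewrite subr_gt0 x_lt_x0 -[x0 - x]gtr0_norm ?subr_gt0 // distrC.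
Qed.
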